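(* Let $f\in\operatorname{NDPF}^{(1)}_N$ and let $F_f$ be the set of integers that are maximal elements of their fibers under $f$. If $m,m'$ are distinct elements of $F_f\cap\{1,2,\dots,N\}$, then $f(m)\not\equiv f(m')\pmod N$.
   Context: $\operatorname{NDPF}^{(1)}_N$ is the set of functions $f:\mathbb{Z}\to\mathbb{Z}$ that are regressive ($f(i)\le i$), order preserving and skew periodic ($f(i+N)=f(i)+N$), excluding the shift functions $i\mapsto i-t$ with $t\ne0$. The fiber of $i$ under $f$ is $f^{-1}(f(i))$. *)

From Stdlib Require Import ZArith Znumtheory Lia.
Open Scope Z_scope.

Definition regressive (f : Z -> Z) : Prop := forall i, f i <= i.

Definition order_preserving (f : Z -> Z) : Prop := forall i j, i <= j -> f i <= f j.

Definition skew_periodic (N : Z) (f : Z -> Z) : Prop := forall i, f (i + N) = f i + N.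

Definition is_nonzero_shift (f : Z -> Z) : Prop :=
  exists t, t <> 0 /\ forall i, f i = i - t.

Definition NDPF1 (N : Z) (f : Z -> Z) : Prop :=
  regressive f /\ order_preserving f /\ skew_periodic N f /\ ~ is_nonzero_shift f.

Definition fiber_max (f : Z -> Z) (m : Z) : Prop :=
  forall j, f j = f m -> j <= m.

From Stdlib Require Import ZArith Znumtheory Lia.
Open Scope Z_scope.

(* If m < m' < m + N are both fiber maxima, monotonicity and skew periodicity
   squeeze f m' between f m and f (m + N) = f m + N, and fiber maximality makes
   both inequalities strict; so f m' - f m lies strictly between 0 and N. *)

Lemma fiber_max_lt (f : Z -> Z) (m j : Z) :
  order_preserving f -> fiber_max f m -> m < j -> f m < f j.
Proof.
  intros Hmono Hmax Hmj.
  assert (Hle : f m <= f j) by (apply Hmono; lia).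
  destruct (Z.eq_dec (f j) (f m)) as [Heq | Hneq].
  - specialize (Hmax j Heq); lia.
  - lia.
Qed.

Lemma fiber_max_image_gap (N : Z) (f : Z -> Z) (m m' : Z) :
  order_preserving f -> skew_periodic N f ->
  fiber_max f m -> fiber_max f m' -> m < m' < m + N ->
  0 < f m' - f m < N.
Proof.
  intros Hmono Hskew Hm Hm' Hrange.
  assert (Hlow : f m < f m') by (apply fiber_max_lt; auto; lia).
  assert (Hup : f m' < f (m + N)) by (apply fiber_max_lt; auto; lia).
  rewrite Hskew in Hup; lia.
Qed.

Lemma not_divide_strictly_between (N d : Z) : 0 < d < N -> ~ (N | d).
Proof.
  intros Hd Hdiv.
  pose proof (Z.divide_pos_le N d (proj1 Hd) Hdiv); lia.
Qed.

Theorem mainTheorem9 (N : Z) (f : Z -> Z) (m m' : Z) :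
  1 <= N -> NDPF1 N f ->
  fiber_max f m -> fiber_max f m' ->
  1 <= m <= N -> 1 <= m' <= N -> m <> m' ->
  ~ (N | f m - f m').
Proof.
  intros HN [_ [Hmono [Hskew _]]] Hm Hm' Hr Hr' Hne Hdiv.
  destruct (Z_lt_ge_dec m m') as [Hlt | Hge].
  - apply (not_divide_strictly_between N (f m' - f m)).
    + apply (fiber_max_image_gap N); auto; lia.
    + replace (f m' - f m) with (- (f m - f m')) by ring.
      now apply Z.divide_opp_r.
  - apply (not_divide_strictly_between N (f m - f m')); auto.
    apply (fiber_max_image_gap N); auto; lia.
Qed.
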